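(* Let $R>0$ and let $f\colon\mathbb{R}\to(0,\infty)$ be a continuously differentiable convex function. Put $\alpha(t)=\dfrac{tf'(t)-f(t)}{\sqrt{1+f'(t)^2}}$ and $C^+=\{t>0\mid\alpha(t)\ge R\}$. Then either $C^+=\emptyset$, or $t_0^+:=\inf C^+>0$ and $C^+=[t_0^+,\infty)$. *)

From Stdlib Require Import Reals.
From Coquelicot Require Import Coquelicot.
Open Scope R_scope.

Definition convex_fun (f : R -> R) : Prop :=
  forall x y l, 0 <= l <= 1 ->
    f (l * x + (1 - l) * y) <= l * f x + (1 - l) * f y.

Definition cont_diff (f : R -> R) : Prop :=
  (forall t, ex_derive f t) /\ (forall t, continuous (Derive f) t).

Definition alpha (f : R -> R) (t : R) : R :=
  (t * Derive f t - f t) / sqrt (1 + (Derive f t) ^ 2).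

Definition C_plus_set (f : R -> R) (Rad : R) (t : R) : Prop :=
  0 < t /\ alpha f t >= Rad.

Definition is_inf (E : R -> Prop) (m : R) : Prop :=
  (forall x, E x -> m <= x) /\ (forall b, (forall x, E x -> b <= x) -> b <= m).

From Stdlib Require Import Reals Lra Classical.
From Coquelicot Require Import Coquelicot.
Open Scope R_scope.

(* Put g(t) = t f'(t) - f(t), so that alpha(t) >= R means g(t) >= R sqrt(1 + f'(t)^2).
   At a point t of C^+ positivity of f forces f'(t) > 0 and t > R.  By convexity f' is
   nondecreasing and f lies above its tangent at s, whence g(s) >= g(t) + t (f'(s) - f'(t))
   for t <= s; as x |-> sqrt(1 + x^2) is 1-Lipschitz and t > R, the set C^+ is closed
   upwards.  Continuity of alpha makes C^+ closed, so its infimum, which is at least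
   R > 0, lies in C^+. *)

Lemma is_lim_difference_quotient (g : R -> R) x l :
  is_derive g x l -> is_lim (fun h => (g (x + h) - g x) / h) 0 l.
Proof.
intros Hg%is_derive_Reals. apply is_lim_spec; intros eps.
destruct (Hg eps (cond_pos eps)) as [delta Hdelta].
exists delta; intros h Hh Hh0.
apply Hdelta; [exact Hh0|].
change (Rabs (h - 0) < delta) in Hh. rewrite Rminus_0_r in Hh. exact Hh.
Qed.

Section ConvexFunction.

Variable f : R -> R.
Hypothesis f_convex : convex_fun f.

Lemma convex_chord_quotient_le x y k :
  0 < k <= 1 -> (f (x + k * (y - x)) - f x) / k <= f y - f x.
Proof.
intros Hk. apply Rle_div_l; [lra|].
assert (Hc := f_convex y x k ltac:(lra)).
replace (x + k * (y - x)) with (k * y + (1 - k) * x) by ring. lra.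
Qed.

Lemma convex_tangent_le x y :
  ex_derive f x -> f x + Derive f x * (y - x) <= f y.
Proof.
intros Hx.
(* Let k -> 0+ in the chord bound for k |-> f (x + k (y - x)). *)
set (g := fun k => f (x + k * (y - x))).
assert (Hg : is_derive g 0 ((y - x) * Derive f x)).
{ apply (is_derive_comp f (fun k => x + k * (y - x))).
  - rewrite Rmult_0_l, Rplus_0_r. exact (Derive_correct _ _ Hx).
  - auto_derive; [exact I | ring]. }
pose proof (is_lim_difference_quotient g 0 _ Hg) as Hquot.
assert (Hle : Rbar_le ((y - x) * Derive f x) (f y - f x)).
{ apply (filterlim_le (F := at_right 0)
           (fun k => (g (0 + k) - g 0) / k) (fun _ => f y - f x)).
  - exists (mkposreal 1 Rlt_0_1); intros k Hk Hk0.
    change (Rabs (k - 0) < 1) in Hk. rewrite Rminus_0_r in Hk.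
    unfold g. rewrite Rplus_0_l, Rmult_0_l, Rplus_0_r.
    apply convex_chord_quotient_le. split; [lra|].
    apply Rabs_lt_between in Hk. lra.
  - apply (filterlim_filter_le_1 (F := Rbar_locally' 0)); [|exact Hquot].
    intros P [delta HP]; exists delta; intros u Hu Hu0.
    apply HP; [exact Hu | lra].
  - apply filterlim_const. }
simpl in Hle. lra.
Qed.

Lemma convex_Derive_le x y :
  ex_derive f x -> ex_derive f y -> x <= y -> Derive f x <= Derive f y.
Proof.
intros Hx Hy Hxy.
destruct (Req_dec x y) as [<-|Hne]; [lra|].
pose proof (convex_tangent_le x y Hx).
pose proof (convex_tangent_le y x Hy).
nra.
Qed.

End ConvexFunction.

Lemma lt_sqrt_1_plus_sqr p : p < sqrt (1 + p ^ 2).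
Proof.
apply Rle_lt_trans with (Rabs p); [apply Rle_abs|].
rewrite <- sqrt_Rsqr_abs. apply sqrt_lt_1_alt. unfold Rsqr. nra.
Qed.

Lemma sqrt_1_plus_sqr_le p q :
  p <= q -> sqrt (1 + q ^ 2) <= sqrt (1 + p ^ 2) + (q - p).
Proof.
intros Hpq.
pose proof (lt_sqrt_1_plus_sqr p) as Hp.
pose proof (sqrt_sqrt (1 + p ^ 2) ltac:(nra)) as Hsq.
pose proof (Rmult_le_pos (sqrt (1 + p ^ 2) - p) (q - p) ltac:(lra) ltac:(lra)).
apply Rsqr_incr_0_var; [|pose proof (sqrt_pos (1 + p ^ 2)); lra].
unfold Rsqr. rewrite sqrt_sqrt by nra. nra.
Qed.

Lemma alpha_ge_iff f Rad t :
  alpha f t >= Rad <->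
  t * Derive f t - f t >= Rad * sqrt (1 + Derive f t ^ 2).
Proof.
assert (Hs : 0 < sqrt (1 + Derive f t ^ 2)) by (apply sqrt_lt_R0; nra).
unfold alpha. split; intros H; apply Rle_ge; apply Rge_le in H.
- now apply Rle_div_r.
- now apply Rle_div_r.
Qed.

Lemma continuous_alpha f t : cont_diff f -> continuous (alpha f) t.
Proof.
intros [Hd Hc].
assert (Hf : continuous f t)
  by apply (ex_derive_continuous (V := R_NormedModule)), Hd.
assert (HD := Hc t).
unfold alpha, Rdiv.
apply (continuous_mult (fun y => y * Derive f y - f y)
                       (fun y => / sqrt (1 + Derive f y ^ 2))).
- apply (continuous_minus (fun y => y * Derive f y) f); [|exact Hf].
  apply (continuous_mult (fun y => y) (Derive f)); [apply continuous_id | exact HD].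
- apply continuous_Rinv_comp.
  + apply continuous_sqrt_comp.
    apply (continuous_plus (fun _ => 1) (fun y => Derive f y ^ 2)); [apply continuous_const|].
    apply (continuous_mult (Derive f) (fun y => Derive f y ^ 1)); [exact HD|].
    apply (continuous_mult (Derive f) (fun _ => 1)); [exact HD | apply continuous_const].
  + apply Rgt_not_eq, sqrt_lt_R0. nra.
Qed.

Lemma C_plus_set_gt f Rad t :
  0 <= Rad -> 0 < f t -> C_plus_set f Rad t -> Rad < t.
Proof.
intros HR Hf [Ht Ha]. apply alpha_ge_iff in Ha.
pose proof (lt_sqrt_1_plus_sqr (Derive f t)).
pose proof (sqrt_pos (1 + Derive f t ^ 2)).
assert (Hp : 0 < Derive f t) by nra.
nra.
Qed.

Lemma C_plus_set_le_closed f Rad t s :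
  0 <= Rad -> 0 < f t -> convex_fun f -> ex_derive f t -> ex_derive f s ->
  C_plus_set f Rad t -> t <= s -> C_plus_set f Rad s.
Proof.
intros HR Hf Hconv Hdt Hds Hts Hle.
pose proof (C_plus_set_gt f Rad t HR Hf Hts) as HRt.
destruct Hts as [Ht Ha]. split; [lra|].
apply alpha_ge_iff in Ha. apply alpha_ge_iff.
pose proof (convex_Derive_le f Hconv t s Hdt Hds Hle) as Hpq.
pose proof (convex_tangent_le f Hconv s t Hds).
pose proof (sqrt_1_plus_sqr_le _ _ Hpq).
nra.
Qed.

Lemma is_inf_exists (E : R -> Prop) :
  (exists x, E x) -> (exists b, forall x, E x -> b <= x) -> exists m, is_inf E m.
Proof.
intros [x Hx] [b Hb].
destruct (completeness (fun y => E (- y))) as [m [Hub Hleast]].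
- exists (- b). intros y Hy. specialize (Hb _ Hy). lra.
- exists (- x). now rewrite Ropp_involutive.
- exists (- m). split.
  + intros y Hy. assert (- y <= m) by (apply Hub; now rewrite Ropp_involutive). lra.
  + intros c Hc. assert (m <= - c); [|lra].
    apply Hleast. intros y Hy. specialize (Hc _ Hy). lra.
Qed.

Lemma is_inf_continuous_ge (E : R -> Prop) (h : R -> R) m c :
  is_inf E m -> continuous h m -> (forall x, E x -> c <= h x) -> c <= h m.
Proof.
intros [Hlb Hglb] Hh HE.
apply Rnot_lt_le; intros Hlt.
destruct (proj1 (filterlim_locally h (h m)) Hh (mkposreal _ (proj2 (Rlt_0_minus _ _) Hlt)))
  as [delta Hdelta].
assert (m + delta <= m); [|pose proof (cond_pos delta); lra].
apply Hglb. intros x Hx. apply Rnot_lt_le; intros Hx'.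
pose proof (Hlb x Hx).
assert (Hball : ball m delta x).
{ change (Rabs (x - m) < delta). apply Rabs_lt_between'. lra. }
specialize (Hdelta x Hball). specialize (HE x Hx).
change (Rabs (h x - h m) < c - h m) in Hdelta.
apply Rabs_lt_between' in Hdelta. lra.
Qed.

Theorem corollary9 (Rad : R) (f : R -> R)
  (hR : 0 < Rad) (hpos : forall t, 0 < f t)
  (hC1 : cont_diff f) (hconv : convex_fun f) :
  (forall t, ~ C_plus_set f Rad t) \/
  (exists t0, is_inf (C_plus_set f Rad) t0 /\ 0 < t0 /\
     forall t, C_plus_set f Rad t <-> t0 <= t).
Proof.
destruct (classic (exists t, C_plus_set f Rad t)) as [Hne|Hempty].
2: { left. intros t Ht. apply Hempty. now exists t. }
right.
destruct (is_inf_exists (C_plus_set f Rad) Hne) as [t0 Ht0].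
{ exists 0. intros t [Ht _]. lra. }
assert (HRt0 : Rad <= t0).
{ apply (proj2 Ht0). intros t Ht. left.
  exact (C_plus_set_gt f Rad t (Rlt_le _ _ hR) (hpos t) Ht). }
assert (Hin : C_plus_set f Rad t0).
{ split; [lra|]. apply Rle_ge.
  apply (is_inf_continuous_ge _ _ _ _ Ht0 (continuous_alpha f t0 hC1)).
  intros t [_ Ht]. lra. }
exists t0. split; [exact Ht0|]. split; [lra|].
intros t. split; [apply (proj1 Ht0)|].
apply (C_plus_set_le_closed f Rad t0 t (Rlt_le _ _ hR) (hpos t0) hconv
         (proj1 hC1 t0) (proj1 hC1 t) Hin).
Qed.
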